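(* For each $c>0$ let $\alpha_c,\beta_c,\gamma:\mathbb{R}^n\times\mathbb{S}^m\to\mathbb{R}$ satisfy: (a) $\alpha_c,\beta_c,\gamma$ are continuously differentiable for all $c>0$; (b) $\alpha_c(x,\Lambda)>0$ for all $x$ feasible for (NSDP), all $\Lambda\in\mathbb{S}^m$ and all $c>0$; and, for every KKT pair $(\bar x,\bar\Lambda)$ of (NSDP): (c) $\alpha_c(\bar x,\bar\Lambda)\beta_c(\bar x,\bar\Lambda)=1$ for all $c>0$; (d) $\gamma(\bar x,\bar\Lambda)=0$, $\nabla_x\gamma(\bar x,\bar\Lambda)=0$ and $\nabla_\Lambda\gamma(\bar x,\bar\Lambda)=0$; (e) there exist neighborhoods $V_{\bar x}$ of $\bar x$ and $V_{\bar\Lambda}$ of $\bar\Lambda$ and a continuous function $\Gamma:V_{\bar x}\to V_{\bar\Lambda}$ with $\Gamma(\bar x)=\bar\Lambda$ and $\gamma(x,\Gamma(x))=0$ for all $x\in V_{\bar x}$. Define $$\mathcal{A}_c(x,\Lambda):=f(x)+\alpha_c(x,\Lambda)\,\varphi\big(G(x),\beta_c(x,\Lambda)\Lambda\big)+\gamma(x,\Lambda),\qquad \varphi(Y,Z)=\Big\|P\Big(\tfrac Z2-Y\Big)\Big\|_F^2-\tfrac{\|Z\|_F^2}{4}.$$ If $(x,\Lambda)\in\mathbb{R}^n\times\mathbb{S}^m$ is a KKT pair of (NSDP), then for all $c>0$, $(x,\Lambda)$ is a stationary point of $\mathcal{A}_c$ (i.e. $\nabla_x\mathcal{A}_c(x,\Lambda)=0$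 and $\nabla_\Lambda\mathcal{A}_c(x,\Lambda)=0$) and $\mathcal{A}_c(x,\Lambda)=f(x)$.
   Context: $\mathbb{S}^m$ is the space of real symmetric $m\times m$ matrices with inner product $\langle Y,Z\rangle=\operatorname{tr}(YZ)$ and Frobenius norm $\|\cdot\|_F$; $\mathbb{S}^m_+$ is the positive semidefinite cone and $P$ the orthogonal projection onto $\mathbb{S}^m_+$. $f:\mathbb{R}^n\to\mathbb{R}$ and $G:\mathbb{R}^n\to\mathbb{S}^m$ are twice continuously differentiable; (NSDP) is: minimize $f(x)$ subject to $G(x)\in\mathbb{S}^m_+$. For $x\in\mathbb{R}^n$, $\nabla G(x)v=\sum_i v_i\,\partial G(x)/\partial x_i$ and its adjoint is $\nabla G(x)^*Z=(\langle \partial G(x)/\partial x_i,Z\rangle)_{i=1}^n$. The Lagrangian is $L(x,\Lambda)=f(x)-\langle G(x),\Lambda\rangle$, so $\nabla_xL(x,\Lambda)=\nabla f(x)-\nabla G(x)^*\Lambda$. With the Jordan product $Y\circ Z=(YZ+ZY)/2$, a pair $(x,\Lambda)$ is a KKT pair of (NSDP) if $\nabla_xL(x,\Lambda)=0$, $\Lambda\circ G(x)=0$, $G(x)\in\mathbb{S}^m_+$ and $\Lambda\in\mathbb{S}^m_+$. *)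

(* R : realType, R^n = 'rV[R]_n,
   S^m = symmetric matrices inside 'M[R]_m. *)
From mathcomp Require Import all_boot all_order all_algebra.
From mathcomp Require Import all_classical all_reals all_analysis.
Set Implicit Arguments. Unset Strict Implicit. Unset Printing Implicit Defensive.
Import Order.TTheory GRing.Theory Num.Theory.
Import numFieldNormedType.Exports.
Local Open Scope ring_scope.
Local Open Scope classical_set_scope.

Definition symmx (R : realType) (m : nat) (Y : 'M[R]_m) : Prop := Y^T = Y.

Definition psdmx (R : realType) (m : nat) (Y : 'M[R]_m) : Prop :=
  Y^T = Y /\ forall v : 'rV[R]_m, 0 <= (v *m Y *m v^T) 0 0.

Definition frob (R : realType) (m : nat) (Y : 'M[R]_m) : R :=
  Num.sqrt (\sum_(i < m) \sum_(j < m) Y i j ^+ 2).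

Definition is_psd_proj (R : realType) (m : nat) (X Y : 'M[R]_m) : Prop :=
  psdmx Y /\ forall Z : 'M[R]_m, psdmx Z -> frob (X - Y) <= frob (X - Z).

Definition psd_proj (R : realType) (m : nat) (X : 'M[R]_m) : 'M[R]_m :=
  xget 0 [set Y | is_psd_proj X Y].

Definition phi (R : realType) (m : nat) (Y Z : 'M[R]_m) : R :=
  frob (psd_proj (2^-1 *: Z - Y)) ^+ 2 - frob Z ^+ 2 / 4.

Definition jordan (R : realType) (m : nat) (Y Z : 'M[R]_m) : 'M[R]_m :=
  2^-1 *: (Y *m Z + Z *m Y).

Definition evec (R : realType) (n : nat) (i : 'I_n) : 'rV[R]_n := delta_mx 0 i.

Definition gradf (R : realType) (n : nat) (f : 'rV[R]_n -> R) (x : 'rV[R]_n)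
  : 'rV[R]_n := \row_i ('d f x (evec R i)).

Definition DG_adj (R : realType) (n m : nat) (G : 'rV[R]_n -> 'M[R]_m)
  (x : 'rV[R]_n) (Z : 'M[R]_m) : 'rV[R]_n :=
  \row_i \tr ('d G x (evec R i) *m Z).

Definition gradL (R : realType) (n m : nat) (f : 'rV[R]_n -> R)
  (G : 'rV[R]_n -> 'M[R]_m) (x : 'rV[R]_n) (L : 'M[R]_m) : 'rV[R]_n :=
  gradf f x - DG_adj G x L.

Definition KKT (R : realType) (n m : nat) (f : 'rV[R]_n -> R)
  (G : 'rV[R]_n -> 'M[R]_m) (x : 'rV[R]_n) (L : 'M[R]_m) : Prop :=
  gradL f G x L = 0 /\ jordan L (G x) = 0 /\ psdmx (G x) /\ psdmx L.

Definition C1 (R : realType) (U V : normedModType R) (g : U -> V) : Prop :=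
  (forall p, differentiable g p) /\ (forall v : U, continuous (fun p => 'd g p v)).

Definition C2 (R : realType) (U V : normedModType R) (g : U -> V) : Prop :=
  (forall p, differentiable g p) /\ (forall v : U, C1 (fun p => 'd g p v)).

Definition Acal (R : realType) (n m : nat) (f : 'rV[R]_n -> R)
  (G : 'rV[R]_n -> 'M[R]_m) (al be : R -> 'rV[R]_n * 'M[R]_m -> R)
  (ga : 'rV[R]_n * 'M[R]_m -> R) (c : R) (p : 'rV[R]_n * 'M[R]_m) : R :=
  f p.1 + al c p * phi (G p.1) (be c p *: p.2) + ga p.

From HB Require Import structures.
From mathcomp Require Import all_boot all_order all_algebra.
From mathcomp Require Import all_classical all_reals all_analysis.
From mathcomp Require Import ring lra.
Set Implicit Arguments. Unset Strict Implicit. Unset Printing Implicit Defensive.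
Import Order.TTheory GRing.Theory Num.Theory.
Import numFieldNormedType.Exports.
Local Open Scope ring_scope.
Local Open Scope classical_set_scope.

(* At a KKT pair (x, L) both G x and L are positive semidefinite and <L, G x> = 0. By
   self-duality of the semidefinite cone, the projection of b L / 2 - G x onto it is then
   b L / 2 for every b >= 0, so phi (G x) (b L) = 0 and A_c (x, L) = f x + ga (x, L) = f x.
   Since the projection is firmly nonexpansive, X |-> |P X|^2 is differentiable with
   gradient 2 P X; hence the derivative of phi at (G x, b L) is (dY, dZ) |-> -<b L, dY>.
   With al be = 1 the derivative of A_c at (x, L) reduces to that of ga, which vanishes
   by (d). *)

Section FrobeniusProduct.
Variables (R : realType) (m : nat).
Implicit Types (A B C : 'M[R]_m) (k : R).

Definition mxdot A B : R := \sum_(i < m) \sum_(j < m) A i j * B i j.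
Definition mxnorm2 A : R := mxdot A A.

Lemma mxdotC A B : mxdot A B = mxdot B A.
Proof. by apply: eq_bigr => i _; apply: eq_bigr => j _; rewrite mulrC. Qed.

Lemma mxdot_is_linear A : linear (mxdot A).
Proof.
move=> k B C; rewrite /mxdot scaler_sumr -big_split; apply: eq_bigr => i _.
by rewrite scaler_sumr -big_split; apply: eq_bigr => j _; rewrite !mxE mulrDr -scalerAr.
Qed.

HB.instance Definition _ A :=
  GRing.isLinear.Build R 'M[R]_m R *:%R (mxdot A) (mxdot_is_linear A).

Lemma mxdotZr k A B : mxdot A (k *: B) = k * mxdot A B.
Proof. exact: linearZ. Qed.

Lemma mxdotDl A B C : mxdot (A + B) C = mxdot A C + mxdot B C.
Proof. by rewrite mxdotC linearD /= !(mxdotC C). Qed.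

Lemma mxdotZl k A B : mxdot (k *: A) B = k * mxdot A B.
Proof. by rewrite mxdotC mxdotZr mxdotC. Qed.

Lemma mxdotBl A B C : mxdot (A - B) C = mxdot A C - mxdot B C.
Proof. by rewrite mxdotC linearB /= !(mxdotC C). Qed.

Lemma mxdotE A B : mxdot A B = \tr (A *m B^T).
Proof.
by apply: eq_bigr => i _; rewrite mxE; apply: eq_bigr => j _; rewrite mxE.
Qed.

Lemma mxdot_jordan_eq0 A B : B^T = B -> jordan A B = 0 -> mxdot A B = 0.
Proof.
move=> sB /(congr1 mxtrace); rewrite mxtraceZ mxtraceD mxtrace_mulC mxtrace0.
rewrite mxdotE sB => /eqP; rewrite mulf_eq0 invr_eq0 pnatr_eq0 -mulr2n mulrn_eq0 /=.
by rewrite mxtrace_mulC => /eqP.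
Qed.

Lemma mxnorm2_ge0 A : 0 <= mxnorm2 A.
Proof. by apply: sumr_ge0 => i _; apply: sumr_ge0 => j _; rewrite -expr2 sqr_ge0. Qed.

Lemma mxnorm2D A B : mxnorm2 (A + B) = mxnorm2 A + 2 * mxdot A B + mxnorm2 B.
Proof. by rewrite /mxnorm2 mxdotDl !linearD /= (mxdotC B A); ring. Qed.

Lemma mxnorm2B A B : mxnorm2 (A - B) = mxnorm2 A - 2 * mxdot A B + mxnorm2 B.
Proof. by rewrite /mxnorm2 mxdotBl !linearB /= (mxdotC B A); ring. Qed.

Lemma mxnorm2Z k A : mxnorm2 (k *: A) = k ^+ 2 * mxnorm2 A.
Proof. by rewrite /mxnorm2 mxdotZl mxdotZr mulrA -expr2. Qed.

Lemma mxnorm2N A : mxnorm2 (- A) = mxnorm2 A.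
Proof. by rewrite -scaleN1r mxnorm2Z sqrrN expr1n mul1r. Qed.

Lemma sqr_entry_le_mxnorm2 A i j : A i j ^+ 2 <= mxnorm2 A.
Proof.
rewrite /mxnorm2 /mxdot (bigD1 i) //= (bigD1 j) //= -expr2 -addrA lerDl.
apply: addr_ge0; first by apply: sumr_ge0 => l _; rewrite -expr2 sqr_ge0.
by apply: sumr_ge0 => k _; apply: sumr_ge0 => l _; rewrite -expr2 sqr_ge0.
Qed.

Lemma mxnorm2_eq0 A : mxnorm2 A = 0 -> A = 0.
Proof.
move=> A0; apply/matrixP => i j; rewrite mxE; apply/eqP.
by rewrite -sqrf_eq0 eq_le sqr_ge0 -A0 sqr_entry_le_mxnorm2.
Qed.

Lemma frobE A : frob A = Num.sqrt (mxnorm2 A).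
Proof. by congr Num.sqrt; apply: eq_bigr => i _; apply: eq_bigr => j _; rewrite expr2. Qed.

Lemma frob_sqr A : frob A ^+ 2 = mxnorm2 A.
Proof. by rewrite frobE sqr_sqrtr ?mxnorm2_ge0. Qed.

Lemma ler_frob A B : (frob A <= frob B) = (mxnorm2 A <= mxnorm2 B).
Proof. by rewrite !frobE ler_sqrt ?mxnorm2_ge0. Qed.

Lemma normr_entry_le_frob A i j : `|A i j| <= frob A.
Proof. by rewrite frobE -sqrtr_sqr ler_sqrt ?mxnorm2_ge0 ?sqr_entry_le_mxnorm2. Qed.

End FrobeniusProduct.

Lemma discr_le (R : realFieldType) (a b c : R) : 0 <= c ->
  (forall t, 0 <= a + 2 * t * b + t ^+ 2 * c) -> b ^+ 2 <= a * c.
Proof.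
move=> c0 h; have [cpos|] := ltP 0 c.
  have := h (- b / c).
  have -> : a + 2 * (- b / c) * b + (- b / c) ^+ 2 * c = (a * c - b ^+ 2) / c.
    by field; rewrite gt_eqF.
  by rewrite pmulr_lge0 ?invr_gt0 // subr_ge0.
move=> cle; have c_eq0 : c = 0 by apply/eqP; rewrite eq_le cle c0.
move: h; rewrite {}c_eq0 => h.
have [-> | bn0] := eqVneq b 0; first by rewrite expr0n mulr0.
have := h (- (a + 1) / (2 * b)).
have -> : a + 2 * (- (a + 1) / (2 * b)) * b + (- (a + 1) / (2 * b)) ^+ 2 * 0 = -1.
  by rewrite mulr0 addr0; field.
by rewrite lerNr oppr0 ler10.
Qed.

Section Semidefinite.
Variables (R : realType) (m : nat).
Implicit Types (A B G Z : 'M[R]_m) (u v w : 'rV[R]_m).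

Definition mxform Z u v : R := (u *m Z *m v^T) 0 0.

Lemma mxformC Z u v : Z^T = Z -> mxform Z u v = mxform Z v u.
Proof.
move=> sZ; rewrite /mxform -(trmxK (u *m Z *m v^T)) [in LHS]mxE.
by rewrite !trmx_mul trmxK sZ mulmxA.
Qed.

Lemma mxformDl Z u v w : mxform Z (u + v) w = mxform Z u w + mxform Z v w.
Proof. by rewrite /mxform !mulmxDl mxE. Qed.

Lemma mxformZl Z k u v : mxform Z (k *: u) v = k * mxform Z u v.
Proof. by rewrite /mxform -!scalemxAl mxE. Qed.

Lemma mxform_delta Z i j : mxform Z (delta_mx 0 i) (delta_mx 0 j) = Z i j.
Proof. by rewrite /mxform -rowE trmx_delta -colE !mxE. Qed.

Lemma psd_cauchy_schwarz Z u v : psdmx Z ->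
  mxform Z u v ^+ 2 <= mxform Z u u * mxform Z v v.
Proof.
move=> [sZ Z_ge0]; apply: discr_le; first exact: Z_ge0.
move=> t; have := Z_ge0 (u + t *: v); rewrite -/(mxform _ _ _).
rewrite mxformDl mxformZl !(mxformC _ (u + _)) // !mxformDl !mxformZl.
by rewrite (mxformC v u) //; congr (0 <= _); ring.
Qed.

Lemma psd_diag_ge0 Z i : psdmx Z -> 0 <= Z i i.
Proof. by move=> [_ Z_ge0]; rewrite -mxform_delta; apply: Z_ge0. Qed.

Lemma psd_entry_eq0 Z i j : psdmx Z -> Z i i = 0 -> Z i j = 0.
Proof.
move=> Zpsd Zii0; have := psd_cauchy_schwarz (delta_mx 0 i) (delta_mx 0 j) Zpsd.
rewrite !mxform_delta Zii0 mul0r => h; apply/eqP.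
by rewrite -sqrf_eq0 eq_le h sqr_ge0.
Qed.

Lemma psd0 : psdmx (0 : 'M[R]_m).
Proof. by split=> [|v]; rewrite ?trmx0 // mulmx0 mul0mx mxE. Qed.

Lemma psdD A B : psdmx A -> psdmx B -> psdmx (A + B).
Proof.
move=> [sA A_ge0] [sB B_ge0]; split=> [|v]; first by rewrite linearD /= sA sB.
by rewrite mulmxDr mulmxDl mxE addr_ge0.
Qed.

Lemma psdZ k A : 0 <= k -> psdmx A -> psdmx (k *: A).
Proof.
move=> k0 [sA A_ge0]; split=> [|v]; first by rewrite linearZ /= sA.
by rewrite -scalemxAr -scalemxAl mxE mulr_ge0.
Qed.

Lemma mxdot_outer G u : mxdot G (u^T *m u) = mxform G u u.
Proof.
rewrite /mxdot /mxform mxE; under [RHS]eq_bigr => j _ do rewrite !mxE mulr_suml.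
rewrite exchange_big; apply: eq_bigr => i _; apply: eq_bigr => j _.
by rewrite !mxE big_ord1 !mxE; ring.
Qed.

Definition schur_compl Z i := Z - (Z i i)^-1 *: ((row i Z)^T *m row i Z).

Lemma schur_complE Z i j l :
  schur_compl Z i j l = Z j l - (Z i i)^-1 * (Z i j * Z i l).
Proof. by rewrite !mxE big_ord1 !mxE. Qed.

Lemma mxformBZ A B k v : mxform (A - k *: B) v v = mxform A v v - k * mxform B v v.
Proof. by rewrite /mxform mulmxBr mulmxBl -scalemxAr -scalemxAl !mxE. Qed.

Lemma mxform_outer u v : mxform (u^T *m u) v v = ((v *m u^T) 0 0) ^+ 2.
Proof.
rewrite /mxform !mulmxA -(mulmxA (v *m u^T)) mxE big_ord1 expr2; congr (_ * _).
by rewrite -(trmxK (u *m v^T)) mxE trmx_mul trmxK.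
Qed.

Lemma psd_schur_compl Z i : psdmx Z -> psdmx (schur_compl Z i).
Proof.
move=> Zpsd; have sZ : Z^T = Z by case: Zpsd.
have Zji j l : Z j l = Z l j by rewrite -[in LHS]sZ mxE.
split=> [|v].
  by apply/matrixP => j l; rewrite mxE !schur_complE (Zji l j) [Z i l * _]mulrC.
rewrite -/(mxform _ v v) /schur_compl mxformBZ mxform_outer subr_ge0.
have -> : (v *m (row i Z)^T) 0 0 = mxform Z v (delta_mx 0 i).
  by rewrite /mxform rowE trmx_mul sZ mulmxA.
have := psd_cauchy_schwarz v (delta_mx 0 i) Zpsd; rewrite mxform_delta.
have [->|Zii_neq0] := eqVneq (Z i i) 0; first by rewrite invr0 mul0r => _; case: Zpsd => _; apply.
have Zii_gt0 : 0 < Z i i by rewrite lt_neqAle eq_sym Zii_neq0 psd_diag_ge0.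
by rewrite [_^-1 * _]mulrC ler_pdivrMr.
Qed.

(* Self-duality of the cone: Z is split, one diagonal entry at a time, into rank-one
   terms u^T u, and <G, u^T u> = u G u^T >= 0. *)
Lemma mxdot_psd_ge0 G Z : psdmx G -> psdmx Z -> 0 <= mxdot G Z.
Proof.
move=> Gpsd; suff diag_support (s : seq 'I_m) Z' : psdmx Z' ->
    (forall j, j \notin s -> Z' j j = 0) -> 0 <= mxdot G Z'.
  by move=> Zpsd; apply: (diag_support (enum 'I_m)) => // j; rewrite mem_enum.
elim: s Z' => [|i s IH] Z' Zpsd Zdiag.
  have -> : Z' = 0 by apply/matrixP => j l; rewrite mxE psd_entry_eq0 ?Zdiag.
  by rewrite linear0.
have sZ : Z'^T = Z' by case: Zpsd.
have -> : Z' = schur_compl Z' i + (Z' i i)^-1 *: ((row i Z')^T *m row i Z').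
  by rewrite subrK.
rewrite linearD /= mxdotZr mxdot_outer addr_ge0 ?mulr_ge0 ?invr_ge0 ?psd_diag_ge0 //.
- apply: IH (psd_schur_compl i Zpsd) _ => j js; rewrite schur_complE.
  have [->|ji] := eqVneq j i.
    have [->|Zii_neq0] := eqVneq (Z' i i) 0; first by rewrite mul0r mulr0 subr0.
    by rewrite mulrA mulVf // mul1r subrr.
  have Zjj0 : Z' j j = 0 by apply: Zdiag; rewrite in_cons negb_or ji.
  have Zij0 : Z' i j = 0 by rewrite -[in LHS]sZ mxE psd_entry_eq0.
  by rewrite Zjj0 Zij0 mul0r mulr0 subr0.
- by case: Gpsd => _; apply.
Qed.

End Semidefinite.
Arguments psd0 {R m}.

Lemma le0_of_lin_le_quad (R : realFieldType) (s S : R) : 0 <= S ->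
  (forall t, 0 < t -> t <= 1 -> 2 * t * s <= t ^+ 2 * S) -> s <= 0.
Proof.
move=> S_ge0 step; rewrite leNgt; apply/negP => s_gt0.
have SDs_gt0 : 0 < S + s by rewrite ltr_wpDl.
pose t := s / (S + s).
have tE : t * (S + s) = s by rewrite /t divfK // gt_eqF.
have t_gt0 : 0 < t by rewrite divr_gt0.
have t_le1 : t <= 1 by rewrite ler_pdivrMr // mul1r; lra.
have := step t t_gt0 t_le1; nra.
Qed.

Section Projection.
Variables (R : realType) (m : nat).
Implicit Types (X Y Z : 'M[R]_m) (t : R).

Lemma psd_convex Y Z t : psdmx Y -> psdmx Z -> 0 <= t <= 1 -> psdmx (Y + t *: (Z - Y)).
Proof.
move=> Ypsd Zpsd /andP[t_ge0 t_le1].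
have -> : Y + t *: (Z - Y) = (1 - t) *: Y + t *: Z.
  by rewrite scalerBr scalerBl scale1r addrA addrAC.
by apply: psdD; apply: psdZ; rewrite ?subr_ge0.
Qed.

Lemma psd_proj_min X Y Z : is_psd_proj X Y -> psdmx Z ->
  mxnorm2 (X - Y) <= mxnorm2 (X - Z).
Proof. by move=> [_ Ymin] Zpsd; rewrite -ler_frob Ymin. Qed.

Lemma psd_proj_vi X Y Z : is_psd_proj X Y -> psdmx Z -> mxdot (X - Y) (Z - Y) <= 0.
Proof.
move=> XY Zpsd; apply: (le0_of_lin_le_quad (mxnorm2_ge0 (Z - Y))) => t t_gt0 t_le1.
have := psd_proj_min XY (psd_convex (proj1 XY) Zpsd (t := t) _).
rewrite ltW //= t_le1 => /(_ isT).
by rewrite opprD addrA [mxnorm2 (X - Y - _)]mxnorm2B mxnorm2Z mxdotZr; lra.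
Qed.

Lemma psd_proj_orth X Y : is_psd_proj X Y -> mxdot (X - Y) Y = 0.
Proof.
move=> XY; apply/eqP; rewrite eq_le.
have := psd_proj_vi XY (psdZ (ler0n _ 2) (proj1 XY)).
have := psd_proj_vi XY psd0.
by rewrite sub0r linearN /= oppr_le0 scalerDl scale1r addrK => -> ->.
Qed.

Lemma psd_proj_pythagoras X Y : is_psd_proj X Y -> mxnorm2 X = mxnorm2 (X - Y) + mxnorm2 Y.
Proof. by move=> XY; rewrite -{1}(subrK Y X) [LHS]mxnorm2D psd_proj_orth // mulr0 addr0. Qed.

Lemma psd_proj_firm X X' Y Y' : is_psd_proj X Y -> is_psd_proj X' Y' ->
  mxnorm2 (Y - Y') <= mxdot (X - X') (Y - Y').
Proof.
move=> XY XY'; have := psd_proj_vi XY (proj1 XY'); have := psd_proj_vi XY' (proj1 XY).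
by rewrite /mxnorm2 !mxdotBl !linearB /= !(mxdotC Y' Y); lra.
Qed.

Lemma psd_proj_unique X Y Y' : is_psd_proj X Y -> is_psd_proj X Y' -> Y = Y'.
Proof.
move=> XY XY'; have := psd_proj_firm XY XY'; rewrite subrr mxdotC linear0.
move=> h; apply/eqP; rewrite -subr_eq0; apply/eqP/mxnorm2_eq0.
by apply/eqP; rewrite eq_le h mxnorm2_ge0.
Qed.

End Projection.

Section FrobeniusCalculus.
Variables (R : realType) (m : nat).
Implicit Types (A D X Y : 'M[R]_m).

Lemma continuous_mxdot A : continuous (mxdot A).
Proof.
rewrite /mxdot; apply: continuous_big; first exact: add_continuous.
move=> i _; apply: continuous_big; first exact: add_continuous.
by move=> j _ Y; apply: continuousM; [exact: cst_continuous | exact: coord_continuous].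
Qed.

Lemma mxnorm2_le_mx_norm D : mxnorm2 D <= (m * m)%:R * `|D| ^+ 2.
Proof.
have -> : (m * m)%:R * `|D| ^+ 2 = \sum_(i < m) \sum_(j < m) `|D| ^+ 2.
  by rewrite !sumr_const !card_ord -mulrnA mulr_natl.
apply: ler_sum => i _; apply: ler_sum => j _; rewrite -expr2 -real_normK ?num_real //.
rewrite lerXn2r ?nnegrE ?normr_ge0 // [leRHS]/Num.norm /= mx_normrE.
by apply/bigmax_geP; right => /=; exists (i, j).
Qed.

Lemma is_diff_quadratic_remainder (g : 'M[R]_m -> R) X Y (C : R) : 0 <= C ->
  (forall D, `|g (D + X) - g X - mxdot Y D| <= C * mxnorm2 D) -> is_diff X g (mxdot Y).
Proof.
move=> C_ge0 remainder.
have expansion : g \o shift X = cst (g X) + mxdot Y +o_ (0 : 'M[R]_m) id.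
  apply/(@eqaddoP R _ R _ (nbhs (0 : 'M[R]_m))) => eps eps_gt0.
  pose K : R := C * (m * m)%:R + 1.
  have K_gt0 : 0 < K by rewrite ltr_wpDl // mulr_ge0 // ler0n.
  apply/nbhs_ballP; exists (eps / K) => [|D]; first by rewrite /= divr_gt0.
  rewrite -ball_normE /= sub0r normrN ltr_pdivlMr // => DK.
  rewrite opprD addrA; apply: le_trans (remainder D) _.
  have := mxnorm2_le_mx_norm D; have := normr_ge0 D.
  have : 0 <= (m * m)%:R :> R by [].
  rewrite /K in DK; nra.
have dg := diff_unique (@continuous_mxdot Y) expansion.
apply: DiffDef => //; apply/diff_locallyP; rewrite dg; split => //.
exact: continuous_mxdot.
Qed.

Lemma is_diff_mxnorm2 X : is_diff X (@mxnorm2 R m) (mxdot (2 *: X)).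
Proof.
apply: (@is_diff_quadratic_remainder _ _ _ 1) => // D.
by rewrite mxdotZl mxnorm2D mul1r (mxdotC D X) !addrK ger0_norm ?mxnorm2_ge0.
Qed.

End FrobeniusCalculus.

Section ProjectionExists.
Variables (R : realType) (m : nat).
Implicit Types (X Y Z : 'M[R]_m).

Lemma continuous_vec_mx : continuous (@vec_mx R m m).
Proof.
move=> u A /nbhs_ballP[e /= e0 eA]; apply/nbhs_ballP; exists e => //= v [_ uv].
by apply: eA; split => // i j; rewrite !mxE; apply: uv.
Qed.

Lemma closed_psd : closed [set Y : 'M[R]_m | psdmx Y].
Proof.
have -> : [set Y : 'M[R]_m | psdmx Y] =
    \bigcap_(p in [set: 'I_m * 'I_m]) [set Y : 'M[R]_m | Y p.2 p.1 - Y p.1 p.2 = 0] `&`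
    \bigcap_(v in [set: 'rV[R]_m]) [set Y : 'M[R]_m | 0 <= mxdot (v^T *m v) Y].
  apply/seteqP; split=> Y /=.
    move=> [sY Y_ge0]; split=> [[i j] _ | v _] /=.
      by rewrite -[in Y j i]sY mxE subrr.
    by rewrite mxdotC mxdot_outer; apply: Y_ge0.
  move=> [sY Y_ge0]; split=> [|v].
    by apply/matrixP => i j; rewrite mxE; apply/eqP; rewrite -subr_eq0; apply/eqP/(sY (i, j)).
  by have /= := Y_ge0 v I; rewrite mxdotC mxdot_outer.
apply: closedI.
  apply: closed_bigI => -[i j] _.
  have cont : continuous (fun Y : 'M[R]_m => Y j i - Y i j).
    by move=> Y; apply: continuousB; apply: coord_continuous.
  exact: (continuous_closedP _).1 cont _ (@closed_eq _ 0).
apply: closed_bigI => v _.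
exact: (continuous_closedP _).1 (@continuous_mxdot R m (v^T *m v)) _ (@closed_ge _ 0).
Qed.

(* Minimise |X - Y| over the PSD matrices Y with |X - Y| <= |X|, a compact set once
   transported to row vectors by vec_mx. *)
Lemma psd_proj_exists X : exists Y, is_psd_proj X Y.
Proof.
pose dist2 w := mxnorm2 (X - vec_mx w).
pose K := [set w : 'rV[R]_(m * m) | psdmx (vec_mx w) /\ dist2 w <= mxnorm2 X].
have dist2_cont : continuous dist2.
  move=> w; apply: continuous_comp; first by apply: continuousB; [exact: cst_continuous | exact: continuous_vec_mx].
  exact: differentiable_continuous (is_diff_mxnorm2 _).(ex_diff).
have K0 : K 0 by rewrite /K /dist2 /= raddf0 subr0; split; [exact: psd0|].
have Kbounded w : K w -> `|w| <= 2 * frob X.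
  move=> [_ wX]; have frobX_ge0 : 0 <= frob X by rewrite frobE sqrtr_ge0.
  rewrite [leLHS]/Num.norm /= mx_normrE bigmax_le ?mulr_ge0 // => -[i k] _ /=.
  case/mxvec_indexP: k => a b; rewrite (ord1 i).
  have -> : w 0 (mxvec_index a b) = X a b - (X - vec_mx w) a b by rewrite !mxE; ring.
  apply: le_trans (ler_normB _ _) _.
  have := normr_entry_le_frob X a b; have := normr_entry_le_frob (X - vec_mx w) a b.
  have : frob (X - vec_mx w) <= frob X by rewrite ler_frob.
  lra.
have Kcompact : compact K.
  apply: bounded_closed_compact.
    exists (2 * frob X); split; first exact: num_real.
    by move=> M XM w Kw; apply: le_trans (Kbounded w Kw) (ltW XM).
  apply: closedI.
    exact: (continuous_closedP _).1 continuous_vec_mx _ closed_psd.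
  exact: (continuous_closedP _).1 dist2_cont _ (@closed_le _ _).
have [c Kc c_min] := compact_EVT_min (ex_intro _ 0 K0) Kcompact (continuous_subspaceT dist2_cont).
rewrite inE in Kc; exists (vec_mx c); split=> [|Z Zpsd]; first by case: Kc.
rewrite ler_frob; have [ZX|XZ] := leP (mxnorm2 (X - Z)) (mxnorm2 X).
  by apply: le_trans (c_min (mxvec Z) _) _; rewrite /dist2 ?inE /K /= mxvecK.
by apply: le_trans (ltW XZ); case: Kc.
Qed.

End ProjectionExists.

Section ProjectionNorm.
Variables (R : realType) (m : nat).
Implicit Types (D X Y Z : 'M[R]_m).

Lemma psd_projP X : is_psd_proj X (psd_proj X).
Proof. by apply: xgetPex; apply: psd_proj_exists. Qed.

Lemma psd_projE X Y : is_psd_proj X Y -> psd_proj X = Y.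
Proof. exact: psd_proj_unique (psd_projP X). Qed.

Lemma psd_proj_norm2_remainder X D :
  `|mxnorm2 (psd_proj (D + X)) - mxnorm2 (psd_proj X) - mxdot (2 *: psd_proj X) D|
    <= 2 * mxnorm2 D.
Proof.
set P := psd_proj X; set P' := psd_proj (D + X).
have XP := psd_projP X; have XP' := psd_projP (D + X); rewrite -/P -/P' in XP XP'.
have firm : mxdot (P' - P) D <= mxnorm2 D.
  have := psd_proj_firm XP' XP; have := mxnorm2_ge0 (P' - P - D).
  by rewrite addrK mxnorm2B (mxdotC D); lra.
have lower : mxnorm2 (D + X - P') <= mxnorm2 (X - P) + 2 * mxdot (X - P) D + mxnorm2 D.
  by rewrite -mxnorm2D (addrAC X) [X + D]addrC; apply: psd_proj_min XP' (proj1 XP).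
have upper : mxnorm2 (X - P) <= mxnorm2 (D + X - P') - 2 * mxdot (D + X - P') D + mxnorm2 D.
  by rewrite -mxnorm2B [D + X]addrC addrAC addrK; apply: psd_proj_min XP (proj1 XP').
move: firm lower upper (psd_proj_pythagoras XP) (psd_proj_pythagoras XP').
rewrite (mxnorm2D D X) mxdotZl !mxdotBl mxdotDl (mxdotC D X) => *.
by rewrite ler_norml; apply/andP; split; lra.
Qed.

End ProjectionNorm.

Section ProductCalculus.
Variables (R : realType) (U V W : normedModType R).

Lemma is_diff_fst (p : U * V) : is_diff p fst fst.
Proof.
pose fstL : {linear (U * V)%type -> U} := HB.pack (@fst U V)
  (GRing.isLinear.Build R (U * V)%type U *:%R fst (fun _ _ _ => erefl)).
have fst_cont : continuous fstL by move=> q; apply: cvg_fst.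
by apply: DiffDef; [exact: linear_differentiable | exact: diff_lin].
Qed.

Lemma is_diff_snd (p : U * V) : is_diff p snd snd.
Proof.
pose sndL : {linear (U * V)%type -> V} := HB.pack (@snd U V)
  (GRing.isLinear.Build R (U * V)%type V *:%R snd (fun _ _ _ => erefl)).
have snd_cont : continuous sndL by move=> q; apply: cvg_snd.
by apply: DiffDef; [exact: linear_differentiable | exact: diff_lin].
Qed.

Lemma scale_is_bilinear :
  bilinear_for (GRing.Scale.Law.clone _ _ *:%R _) (GRing.Scale.Law.clone _ _ *:%R _)
    ( *:%R : R -> W -> W).
Proof.
split=> [w|k] a x y /=; first by rewrite scalerDl scalerA.
by rewrite scalerDr !scalerA mulrC.
Qed.

Lemma differentiable_scale (k : U -> R) (h : U -> W) (x : U) :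
  differentiable k x -> differentiable h x -> differentiable (fun y => k y *: h y) x.
Proof.
move=> dk dh.
pose scaleB : {bilinear R -> W -> W} := HB.pack ( *:%R : R -> W -> W)
  (bilinear_isBilinear.Build R R W W _ _ ( *:%R : R -> W -> W) scale_is_bilinear).
have scale_diff (q : R * W) : differentiable (fun q => scaleB q.1 q.2) q.
  by apply: differentiable_bilin => r; apply: scale_continuous.
exact: differentiable_comp (differentiable_pair dk dh) (scale_diff (k x, h x)).
Qed.

End ProductCalculus.

Section Phi.
Variables (R : realType) (m : nat).
Implicit Types (D X Y Z W : 'M[R]_m).

Lemma is_diff_psd_proj_norm2 X :
  is_diff X (fun Y => mxnorm2 (psd_proj Y)) (mxdot (2 *: psd_proj X)).
Proof.
by apply: (@is_diff_quadratic_remainder _ _ _ _ _ 2) => // D; apply: psd_proj_norm2_remainder.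
Qed.

Lemma phiE Y Z : phi Y Z = mxnorm2 (psd_proj (2^-1 *: Z - Y)) - 4^-1 * mxnorm2 Z.
Proof. by rewrite /phi !frob_sqr mulrC. Qed.

Lemma psd_proj_orth_sub Y Z : psdmx Y -> psdmx Z -> mxdot Z Y = 0 -> psd_proj (Z - Y) = Z.
Proof.
move=> Ypsd Zpsd ZY0; apply: psd_projE; split=> // W Wpsd.
rewrite ler_frob addrAC subrr add0r mxnorm2N addrAC mxnorm2B mxdotBl ZY0.
by rewrite sub0r mulrN opprK lerDr addr_ge0 ?mulr_ge0 ?mxnorm2_ge0 ?mxdot_psd_ge0.
Qed.

Lemma psd_proj_half_orth Y Z :
  psdmx Y -> psdmx Z -> mxdot Z Y = 0 -> psd_proj (2^-1 *: Z - Y) = 2^-1 *: Z.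
Proof.
move=> Ypsd Zpsd ZY0; rewrite psd_proj_orth_sub ?mxdotZl ?ZY0 ?mulr0 //.
by apply: psdZ; rewrite ?invr_ge0.
Qed.

Lemma phi_orth Y Z : psdmx Y -> psdmx Z -> mxdot Z Y = 0 -> phi Y Z = 0.
Proof. by move=> *; rewrite phiE psd_proj_half_orth // mxnorm2Z; field. Qed.

Lemma is_diff_phi Y Z : is_diff (Y, Z) (fun p => phi p.1 p.2)
  (fun d => mxdot (2 *: psd_proj (2^-1 *: Z - Y)) (2^-1 *: d.2 - d.1) - 4^-1 * mxdot (2 *: Z) d.2).
Proof.
have -> : (fun p : 'M[R]_m * 'M[R]_m => phi p.1 p.2) =
    (fun X => mxnorm2 (psd_proj X)) \o (2^-1 *: snd - fst) - 4^-1 *: (@mxnorm2 R m \o snd).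
  by apply/funext => p; rewrite phiE.
apply: is_diffB; last by apply: is_diffZ; apply: is_diff_comp; [exact: is_diff_snd | exact: is_diff_mxnorm2].
apply: is_diff_comp; last exact: is_diff_psd_proj_norm2.
by apply: is_diffB; [apply: is_diffZ; exact: is_diff_snd | exact: is_diff_fst].
Qed.

Lemma is_diff_phi_orth Y Z : psdmx Y -> psdmx Z -> mxdot Z Y = 0 ->
  is_diff (Y, Z) (fun p => phi p.1 p.2) (fun d => - mxdot Z d.1).
Proof.
move=> Ypsd Zpsd ZY0; apply: is_diff_eq (is_diff_phi Y Z) _; apply/funext => d /=.
rewrite psd_proj_half_orth // scalerA mulfV ?pnatr_eq0 // scale1r linearB /=.
by rewrite mxdotZr mxdotZl; field.
Qed.

End Phi.

Section Stationarity.
Variables (R : realType) (n m : nat).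
Variables (f : 'rV[R]_n -> R) (G : 'rV[R]_n -> 'M[R]_m).

Lemma gradL_eq0_diff x L : L^T = L -> gradL f G x L = 0 ->
  forall v, 'd f x v = mxdot L ('d G x v).
Proof.
move=> sL /eqP; rewrite /gradL subr_eq0 => /eqP grad v.
have dfe i : 'd f x (delta_mx 0 i) = mxdot L ('d G x (delta_mx 0 i)).
  have := congr1 (fun r : 'rV[R]_n => r 0 i) grad; rewrite !mxE => ->.
  by rewrite mxdotC mxdotE sL.
rewrite [v]row_sum_delta !linear_sum; apply: eq_bigr => i _.
by rewrite !linearZ /= dfe.
Qed.

Variables (al be : R -> 'rV[R]_n * 'M[R]_m -> R) (ga : 'rV[R]_n * 'M[R]_m -> R) (c : R).

Lemma is_diff_Acal_KKT x L :
  differentiable f x -> differentiable G x -> differentiable (al c) (x, L) ->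
  differentiable (be c) (x, L) -> differentiable ga (x, L) ->
  (forall v, 'd f x v = mxdot L ('d G x v)) ->
  psdmx (G x) -> psdmx L -> mxdot L (G x) = 0 ->
  0 <= be c (x, L) -> al c (x, L) * be c (x, L) = 1 ->
  is_diff (x, L) (Acal f G al be ga c) ('d ga (x, L)).
Proof.
move=> df dG dal dbe dga dfE Gpsd Lpsd LG0 be_ge0 albe1.
set p := (x, L); set b := be c p.
pose g q := (G q.1, be c q *: q.2).
have dg : is_diff p g (fun w => ('d G x w.1, 'd (fun q => be c q *: q.2) p w)).
  apply: is_diff_pair; first exact: is_diff_comp (is_diff_fst p) (differentiableP dG).
  apply/differentiableP/differentiable_scale => //.
  exact: (is_diff_snd p).(ex_diff).
have bL_psd : psdmx (b *: L) by exact: psdZ.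
have dphi : is_diff (g p) (fun y => phi y.1 y.2) (fun d => - mxdot (b *: L) d.1).
  by apply: is_diff_phi_orth; rewrite ?mxdotZl ?LG0 ?mulr0.
have -> : Acal f G al be ga c = (f \o fst) + al c * ((fun y => phi y.1 y.2) \o g) + ga.
  by apply/funext.
have dA := is_diffD (is_diffD (is_diff_comp (is_diff_fst p) (differentiableP df))
  (is_diffM (differentiableP dal) (is_diff_comp dg dphi))) (differentiableP dga).
have phi0 : phi (G x) (be c (x, L) *: L) = 0 by rewrite phi_orth // mxdotZl LG0 mulr0.
apply: is_diff_eq dA _; apply/funext => w /=; rewrite phi0 scale0r addr0 !fctE /=.
have scaleE (k r : R) : k *: r = k * r by [].
by rewrite dfE mxdotZl scaleE mulrN mulrA albe1 mul1r addrN add0r.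
Qed.

End Stationarity.

Theorem proposition3p5 (R : realType) (n m : nat)
  (f : 'rV[R]_n -> R) (G : 'rV[R]_n -> 'M[R]_m)
  (al be : R -> 'rV[R]_n * 'M[R]_m -> R) (ga : 'rV[R]_n * 'M[R]_m -> R) :
  C2 f -> C2 G -> (forall x, symmx (G x)) ->
  (* (a) *)
  (forall c, 0 < c -> C1 (al c) /\ C1 (be c)) -> C1 ga ->
  (* (b) *)
  (forall c x L, 0 < c -> psdmx (G x) -> symmx L -> 0 < al c (x, L)) ->
  (* (c), (d), (e) at every KKT pair *)
  (forall xb Lb, KKT f G xb Lb ->
     (forall c, 0 < c -> al c (xb, Lb) * be c (xb, Lb) = 1) /\
     (ga (xb, Lb) = 0 /\
      (forall v : 'rV[R]_n, 'd ga (xb, Lb) (v, 0) = 0) /\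
      (forall H : 'M[R]_m, symmx H -> 'd ga (xb, Lb) (0, H) = 0)) /\
     (exists (Vx : set 'rV[R]_n) (VL : set 'M[R]_m),
        nbhs xb Vx /\
        VL `<=` [set L | symmx L] /\
        (exists2 e : R, 0 < e &
           forall L, symmx L -> frob (L - Lb) < e -> VL L) /\
        exists Gam : 'rV[R]_n -> 'M[R]_m,
          Gam xb = Lb /\ {within Vx, continuous Gam} /\
          (forall x, Vx x -> VL (Gam x) /\ ga (x, Gam x) = 0))) ->
  forall (x : 'rV[R]_n) (L : 'M[R]_m), KKT f G x L ->
  forall c : R, 0 < c ->
    differentiable (Acal f G al be ga c) (x, L) /\
    (forall v : 'rV[R]_n, 'd (Acal f G al be ga c) (x, L) (v, 0) = 0) /\
    (forall H : 'M[R]_m, symmx H -> 'd (Acal f G al be ga c) (x, L) (0, H) = 0) /\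
    Acal f G al be ga c (x, L) = f x.
Proof.
move=> [df _] [dG _] Gsym C1albe C1ga al_gt0 KKTcond x L KKTxL c c_gt0.
have [albe1 [[ga0 [ga_x ga_L]] _]] := KKTcond x L KKTxL.
have [gradL0 [jordan0 [Gpsd Lpsd]]] := KKTxL.
have LG0 : mxdot L (G x) = 0 := mxdot_jordan_eq0 (Gsym x) jordan0.
have [[dal _] [dbe _]] := C1albe c c_gt0.
have be_ge0 : 0 <= be c (x, L).
  by rewrite -(pmulr_rge0 _ (al_gt0 c x L c_gt0 Gpsd (proj1 Lpsd))) albe1.
have dA := is_diff_Acal_KKT (df x) (dG x) (dal _) (dbe _) (C1ga.1 _)
  (gradL_eq0_diff (proj1 Lpsd) gradL0) Gpsd Lpsd LG0 be_ge0 (albe1 c c_gt0).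
split; first exact: ex_diff.
rewrite diff_val; split=> [v|]; first exact: ga_x.
split=> [H sH|]; first exact: ga_L.
by rewrite /Acal /= ga0 addr0 phi_orth ?mulr0 ?addr0 ?mxdotZl ?LG0 ?mulr0 //; exact: psdZ.
Qed.
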